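(* Let $C=2$, $k_1,k_2\ge 1$, and let $w^*_{1,1},\dots,w^*_{1,k_1},w^*_{2,1},\dots,w^*_{2,k_2}\in\mathbb{R}^d/\mathbb{R}\mathbf{1}$. Let $$\mathcal{B}=\{x\in\mathbb{R}^d/\mathbb{R}\mathbf{1}:\ d_{\rm tr}(x,-w^*_{1,i})=d_{\rm tr}(x,-w^*_{2,j})\text{ for some } i\in[k_1],\ j\in[k_2]\}.$$ Then $\mathcal{B}$ contains no full-dimensional cell (i.e. has empty interior in $\mathbb{R}^d/\mathbb{R}\mathbf{1}\cong\mathbb{R}^{d-1}$) if and only if for every $i\in[k_1]$ and $j\in[k_2]$ the pair $w^*_{1,i},w^*_{2,j}$ is in weak general position.
   Context: The tropical projective torus is $\mathbb{R}^d/\mathbb{R}\mathbf{1}$, $\mathbf{1}=(1,\dots,1)$, identified with $\mathbb{R}^{d-1}$ via $x\mapsto(x_2-x_1,\dots,x_d-x_1)$. Tropical metric: $d_{\rm tr}(x,y)=\max_{i}(x_i-y_i)-\min_i(x_i-y_i)$. A tropical ball $B_x(r)=\{y:d_{\rm tr}(x,y)\le r\}$ is a classical polytope whose facets lie in hyperplanes of the form $\{y: y_a-y_b=\text{const}\}$, $a\ne b$. A pair of points $p,q\in\mathbb{R}^d/\mathbb{R}\mathbf{1}$ is in weak general position (with respect to the tropical ball) if they do not lie in a common hyperplane parallel to a facet of a tropical ball, i.e. $p_a-p_b\neq q_a-q_b$ for all $a\neq b$ in $[d]$. $[k]=\{1,\dots,k\}$. *)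

From HB Require Import structures.
From mathcomp Require Import all_boot all_order all_algebra.
From mathcomp Require Import all_classical all_reals all_analysis.
Set Implicit Arguments. Unset Strict Implicit. Unset Printing Implicit Defensive.
Import Order.TTheory GRing.Theory Num.Theory.
Import numFieldNormedType.Exports.
Local Open Scope classical_set_scope.
Local Open Scope ring_scope.

(* Points of R^d with d = n.+1 are row vectors 'rV[R]_(n.+1); a point of the
   tropical projective torus R^d / R1 is represented by any of its representatives. *)

Definition dtr (R : realType) (n : nat) (x y : 'rV[R]_n.+1) : R :=
  \big[Num.max/(x 0 ord0 - y 0 ord0)]_(i < n.+1) (x 0 i - y 0 i)
  - \big[Num.min/(x 0 ord0 - y 0 ord0)]_(i < n.+1) (x 0 i - y 0 i).

(* identification R^d / R1 ~ R^(d-1) : x |-> (x_2 - x_1, ..., x_d - x_1) *)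
Definition torus_coord (R : realType) (n : nat) (x : 'rV[R]_n.+1) : 'rV[R]_n :=
  \row_(j < n) (x 0 (lift ord0 j) - x 0 ord0).

Definition weak_general_position (R : realType) (n : nat) (p q : 'rV[R]_n.+1) : Prop :=
  forall a b : 'I_n.+1, a != b -> p 0 a - p 0 b != q 0 a - q 0 b.

Definition bisector_set (R : realType) (n k1 k2 : nat)
  (w1 : 'I_k1 -> 'rV[R]_n.+1) (w2 : 'I_k2 -> 'rV[R]_n.+1) : set 'rV[R]_n :=
  (@torus_coord R n) @` [set x : 'rV[R]_n.+1 |
     exists (i : 'I_k1) (j : 'I_k2), dtr x (- w1 i) = dtr x (- w2 j)].

(* If p_a - p_b = q_a - q_b for some a <> b, then near a point whose a-th coordinate is
   very large and whose b-th coordinate is very small, both tropical distances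
   d_tr(z, -p) and d_tr(z, -q) are realised by the indices a and b, so they agree on a
   whole ball.  Conversely, on a bisector d_tr(z, -p) = d_tr(z, -q), the extremal indices
   a, b of z + p and c, d of z + q give (z_a - z_b) - (z_c - z_d) = const, and weak
   general position makes this linear form nonzero.  Along the moment curve
   x + (t, t^2, ..., t^(n+1)) each of these finitely many relations becomes a nonzero
   polynomial equation in t, so some small t violates all of them: no ball lies in B. *)

From HB Require Import structures.
From mathcomp Require Import all_boot all_order all_algebra.
From mathcomp Require Import all_classical all_reals all_analysis.
From mathcomp Require Import lra.
Import Order.TTheory GRing.Theory Num.Theory.
Import numFieldNormedType.Exports.
Local Open Scope classical_set_scope.
Local Open Scope ring_scope.

Section BigMaxMinOrd.
Context {R : realDomainType} {m : nat} (F : 'I_m.+1 -> R).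

Lemma bigmax_ord_attained : exists a, \big[Num.max/F ord0]_i F i = F a.
Proof.
apply: (big_ind (fun x => exists a, x = F a)); first by exists ord0.
  by move=> _ _ [a ->] [b ->]; case: (leP (F a) (F b)); [exists b | exists a].
by move=> i _; exists i.
Qed.

Lemma bigmin_ord_attained : exists b, \big[Num.min/F ord0]_i F i = F b.
Proof.
apply: (big_ind (fun x => exists b, x = F b)); first by exists ord0.
  by move=> _ _ [a ->] [b ->]; case: (leP (F a) (F b)); [exists a | exists b].
by move=> i _; exists i.
Qed.

End BigMaxMinOrd.

Lemma four_monomial_poly_neq0 (R : realDomainType) (i j k l : nat) (c : R) :
  i != j -> (i, j) != (k, l) ->
  c%:P + 'X^(i.+1) - 'X^(j.+1) - 'X^(k.+1) + 'X^(l.+1) != 0 :> {poly R}.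
Proof.
move=> ij ijkl; apply/eqP; have [ik|ik] := eqVneq i k.
- have jl : l != j by move: ijkl; rewrite ik xpair_eqE eqxx eq_sym.
  move/(congr1 (fun P : {poly R} => P`_l.+1)).
  rewrite !(coefD, coefB, coefN, coefC, coefXn) /= !eqSS -ik (negbTE jl) eqxx.
  by rewrite mulr0n mulr1n; lra.
- move/(congr1 (fun P : {poly R} => P`_i.+1)).
  rewrite !(coefD, coefB, coefN, coefC, coefXn) /= !eqSS eqxx (negbTE ij) (negbTE ik).
  rewrite mulr0n mulr1n.
  by have := ler0n R (i == l); lra.
Qed.

Lemma poly_nonroot_in_interval {R : realFieldType} (P : {poly R}) [d] :
  P != 0 -> 0 < d -> exists2 t, 0 < t < d & ~~ root P t.
Proof.
move=> P0 d0; pose t k := d / k.+2%:R.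
have t_inj : injective t.
  by move=> k l /(mulfI (lt0r_neq0 d0)) /invr_inj /eqP; rewrite eqr_nat => /eqP [].
have t_in k : 0 < t k < d.
  by rewrite divr_gt0 ?ltr0Sn //= ltr_pdivrMr ?ltr0Sn // ltr_pMr // ltr1n.
have /allPn [_ /mapP [k _ ->] Pk] : ~~ all (root P) (mkseq t (size P)).
  apply/negP => roots; have := max_poly_roots P0 roots (mkseq_uniq _ t_inj).
  by rewrite size_mkseq ltnn.
by exists (t k).
Qed.

Lemma polys_nonroot_in_interval {R : realFieldType} {I : finType}
    (P : I -> {poly R}) (A : {pred I}) [d] :
  (forall s, s \in A -> P s != 0) -> 0 < d ->
  exists2 t, 0 < t < d & forall s, s \in A -> ~~ root (P s) t.
Proof.
move=> PA0 d0; have [|t td] := poly_nonroot_in_interval (\prod_(s in A) P s) _ d0.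
  by apply/prodf_neq0 => s /PA0.
rewrite rootE horner_prod prodf_seq_neq0 => /allP nroot.
by exists t => // s sA; have := nroot s (mem_index_enum s); rewrite sA rootE.
Qed.

Section TropicalDistance.
Context {R : realType} {n : nat}.
Implicit Types (x y z p q w : 'rV[R]_n.+1) (a b c d k : 'I_n.+1).

Lemma dtr_extremal [x y a b] :
  (forall k, x 0 b - y 0 b <= x 0 k - y 0 k <= x 0 a - y 0 a) ->
  dtr x y = (x 0 a - y 0 a) - (x 0 b - y 0 b).
Proof.
move=> ext; rewrite /dtr; congr (_ - _); apply/le_anti.
- rewrite le_bigmax andbT; apply: bigmax_le => [|k _]; exact: (andP (ext _)).2.
- rewrite bigmin_le; apply: le_bigmin => [|k _]; exact: (andP (ext _)).1.
Qed.

Lemma dtr_extremal_exists x y : exists a b,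
  forall k, x 0 b - y 0 b <= x 0 k - y 0 k <= x 0 a - y 0 a.
Proof.
pose F k := x 0 k - y 0 k.
have [a maxa] := bigmax_ord_attained F; have [b minb] := bigmin_ord_attained F.
exists a, b => k; apply/andP; split.
- by rewrite -/(F b) -/(F k) -minb bigmin_le.
- by rewrite -/(F a) -/(F k) -maxa le_bigmax.
Qed.

Lemma ord0_neq_max (hn : (0 < n)%N) : ord0 != ord_max :> 'I_n.+1.
Proof. by rewrite -val_eqE /= eq_sym -lt0n. Qed.

Lemma dtr_opp_eq_relation (hn : (0 < n)%N) [z p q] :
  weak_general_position p q -> dtr z (- p) = dtr z (- q) ->
  exists a b c d, [/\ a != b, (a, b) != (c, d) &
    (z 0 a - z 0 b) - (z 0 c - z 0 d) = (q 0 c - q 0 d) - (p 0 a - p 0 b)].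
Proof.
move=> wgp; have [a [b extp]] := dtr_extremal_exists z (- p).
have [c [d extq]] := dtr_extremal_exists z (- q).
rewrite (dtr_extremal extp) (dtr_extremal extq) !mxE !opprK => E.
have [eab|neab] := eqVneq a b.
  (* then z + p and z + q are both constant, hence so is p - q *)
  case/negP: (wgp _ _ (ord0_neq_max hn)); apply/eqP.
  have := extp ord0; have := extp ord_max; have := extq ord0; have := extq ord_max.
  rewrite !mxE !opprK eab; move: E; rewrite eab; lra.
have [eabcd|neabcd] := eqVneq (a, b) (c, d).
  case: eabcd E => <- <- E; case/negP: (wgp _ _ neab); apply/eqP; lra.
by exists a, b, c, d; split=> //; lra.
Qed.

Lemma dtr_opp_dominant [z w a b S] :
  (forall k, `|w 0 k| <= S) ->
  (forall k, k != a -> z 0 k + 2 * S <= z 0 a) ->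
  (forall k, k != b -> z 0 b + 2 * S <= z 0 k) ->
  dtr z (- w) = (z 0 a + w 0 a) - (z 0 b + w 0 b).
Proof.
move=> wS za zb; rewrite (@dtr_extremal _ _ a b) ?mxE ?opprK // => k.
rewrite !mxE !opprK.
have := wS k; have := wS a; have := wS b; rewrite !ler_norml.
move=> /andP[? ?] /andP[? ?] /andP[? ?]; apply/andP; split.
- by have [->|kb] := eqVneq k b; [rewrite lexx | have := zb k kb; lra].
- by have [->|ka] := eqVneq k a; [rewrite lexx | have := za k ka; lra].
Qed.

End TropicalDistance.

Section TorusCoordinates.
Context {R : realType} {n : nat}.
Implicit Types (x u : 'rV[R]_n.+1) (y : 'rV[R]_n).

Lemma torus_coord_eq_sub [x u] : torus_coord x = torus_coord u ->
  forall a b, x 0 a - x 0 b = u 0 a - u 0 b.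
Proof.
have diff0 k : torus_coord x = torus_coord u -> x 0 k - x 0 ord0 = u 0 k - u 0 ord0.
  case: (unliftP ord0 k) => [j ->|->] E; last by rewrite !subrr.
  by have := congr1 (fun v : 'rV[R]_n => v 0 j) E; rewrite !mxE.
by move=> E a b; have := diff0 a E; have := diff0 b E; lra.
Qed.

Definition torus_lift y : 'rV[R]_n.+1 := \row_k oapp (y 0) 0 (unlift ord0 k).

Lemma torus_liftK : cancel torus_lift (@torus_coord R n).
Proof. by move=> y; apply/rowP => j; rewrite !mxE liftK unlift_none subr0. Qed.

Lemma torus_lift_near [x y e] : ball (torus_coord x) e y ->
  forall k, `|torus_lift y 0 k - (x 0 k - x 0 ord0)| < e.
Proof.
move=> [e0 xy] k; rewrite mxE; case: (unliftP ord0 k) => [j ->|->].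
  by have := xy 0 j; rewrite /ball /= mxE distrC.
by rewrite /= !subrr normr0.
Qed.

Definition moment_curve (x : 'rV[R]_n.+1) (t : R) : 'rV[R]_n.+1 :=
  \row_k (x 0 k + t ^+ k.+1).

Lemma moment_curve_near x [t e] : 0 < t -> t < 1 -> t < e ->
  ball (torus_coord x) e (torus_coord (moment_curve x t)).
Proof.
move=> t0 t1 te; split=> [|i j]; first exact: lt_trans te.
rewrite ord1 /ball /= !mxE expr1.
have tk_ge0 : 0 <= t ^+ (lift ord0 j).+1 by rewrite exprn_ge0 // ltW.
have tk_le : t ^+ (lift ord0 j).+1 <= t.
  by rewrite exprS ler_piMr ?exprn_ile1 // ltW.
by rewrite ltr_norml; apply/andP; split; lra.
Qed.

End TorusCoordinates.

Section NotWeakGeneralPosition.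
Context {R : realType} {n k1 k2 : nat}.
Variables (w1 : 'I_k1 -> 'rV[R]_n.+1) (w2 : 'I_k2 -> 'rV[R]_n.+1).

Lemma bisector_set_interior_nonempty [i j a b] : a != b ->
  w1 i 0 a - w1 i 0 b = w2 j 0 a - w2 j 0 b ->
  exists y, interior (bisector_set w1 w2) y.
Proof.
move=> ab E; set p := w1 i in E *; set q := w2 j in E *.
pose S := \big[Num.max/0]_k Num.max `|p 0 k| `|q 0 k|.
have pS k : `|p 0 k| <= S by apply: le_trans (le_bigmax _ _ k); rewrite le_max lexx.
have qS k : `|q 0 k| <= S.
  by apply: le_trans (le_bigmax _ _ k); rewrite le_max lexx orbT.
have S0 : 0 <= S := le_trans (normr_ge0 _) (pS ord0).
pose M := 2 * S + 2.
pose x := \row_k (if k == a then M else if k == b then - M else 0 : R).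
have xa : x 0 a = M by rewrite mxE eqxx.
have xb : x 0 b = - M by rewrite mxE eq_sym (negbTE ab) eqxx.
have xka k : k != a -> x 0 k <= 0.
  by move=> /negbTE ka; rewrite mxE ka /M; case: ifP => _; lra.
have xkb k : k != b -> 0 <= x 0 k.
  by move=> /negbTE kb; rewrite mxE kb /M; case: ifP => _; lra.
exists (torus_coord x); apply/nbhs_ballP; exists 1 => //= y xy.
have near := torus_lift_near xy.
exists (torus_lift y); last exact: torus_liftK.
exists i, j; set z := torus_lift y.
have za k : k != a -> z 0 k + 2 * S <= z 0 a.
  move=> ka; have := xka k ka; have := near k; have := near a.
  by rewrite xa /M !ltr_norml => /andP[? ?] /andP[? ?]; lra.
have zb k : k != b -> z 0 b + 2 * S <= z 0 k.
  move=> kb; have := xkb k kb; have := near k; have := near b.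
  by rewrite xb /M !ltr_norml => /andP[? ?] /andP[? ?]; lra.
by rewrite (dtr_opp_dominant pS za zb) (dtr_opp_dominant qS za zb); lra.
Qed.

End NotWeakGeneralPosition.

Section WeakGeneralPosition.
Context {R : realType} {n k1 k2 : nat}.
Variables (w1 : 'I_k1 -> 'rV[R]_n.+1) (w2 : 'I_k2 -> 'rV[R]_n.+1).
Hypothesis hn : (0 < n)%N.
Hypothesis wgp : forall i j, weak_general_position (w1 i) (w2 j).

Lemma bisector_set_relation [u] : bisector_set w1 w2 (torus_coord u) ->
  exists i j a b c d, [/\ a != b, (a, b) != (c, d) &
    (u 0 a - u 0 b) - (u 0 c - u 0 d) =
    (w2 j 0 c - w2 j 0 d) - (w1 i 0 a - w1 i 0 b)].
Proof.
move=> [z [i [j zij]] zu].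
have [a [b [c [d [ab abcd E]]]]] := dtr_opp_eq_relation hn (wgp i j) zij.
exists i, j, a, b, c, d; split => //.
by rewrite -!(torus_coord_eq_sub zu).
Qed.

Lemma interior_bisector_set0 : interior (bisector_set w1 w2) = set0.
Proof.
apply/seteqP; split => // _ /[dup] /interior_subset [x _ <-] /nbhs_ballP [e e0 xeB].
pose T := ('I_k1 * 'I_k2 * ('I_n.+1 * 'I_n.+1) * ('I_n.+1 * 'I_n.+1))%type.
pose nontrivial (s : T) := let: (_, _, (a, b), (c, d)) := s in
  (a != b) && ((a, b) != (c, d)).
pose P (s : T) : {poly R} := let: (i, j, (a, b), (c, d)) := s in
  let kappa := (w2 j 0 c - w2 j 0 d) - (w1 i 0 a - w1 i 0 b) in
  ((x 0 a - x 0 b) - (x 0 c - x 0 d) - kappa)%:P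
  + 'X^(a.+1) - 'X^(b.+1) - 'X^(c.+1) + 'X^(d.+1).
have P_neq0 s : s \in nontrivial -> P s != 0.
  by case: s => [[[i j] [a b]] [c d]] /andP[ab abcd]; exact: four_monomial_poly_neq0.
have d0 : 0 < Num.min e 1 by rewrite lt_min e0 ltr01.
have [t /andP[t0]] := polys_nonroot_in_interval P nontrivial P_neq0 d0.
rewrite lt_min => /andP[te t1] nroot.
have [i [j [a [b [c [d [ab abcd E]]]]]]] :=
  bisector_set_relation (xeB _ (moment_curve_near x t0 t1 te)).
have /nroot/negP[] : (i, j, (a, b), (c, d)) \in nontrivial.
  by rewrite unfold_in /= ab abcd.
by apply/eqP; rewrite !hornerE; move: E; rewrite !mxE; lra.
Qed.

End WeakGeneralPosition.

Theorem mainTheorem2 (R : realType) (n k1 k2 : nat) (hn : (0 < n)%N)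
  (hk1 : (1 <= k1)%N) (hk2 : (1 <= k2)%N)
  (w1 : 'I_k1 -> 'rV[R]_n.+1) (w2 : 'I_k2 -> 'rV[R]_n.+1) :
  interior (bisector_set w1 w2) = set0 <->
  (forall (i : 'I_k1) (j : 'I_k2), weak_general_position (w1 i) (w2 j)).
Proof.
split; last exact: interior_bisector_set0.
move=> B0 i j a b ab; apply/eqP => E.
by have [y] := bisector_set_interior_nonempty w1 w2 ab E; rewrite B0.
Qed.
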